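(* Let $L$ be a geometric lattice of rank $r+1$ with linearly ordered atoms, let $B_1,\dots,B_m$ be its nbc-bases in lexicographic order, and let $\Delta_1,\dots,\Delta_m$ be as defined in the context. Then for each $j\ge 2$, $\Delta_j\cap\bigcup_{k=1}^{j-1}\Delta_k=\partial\Delta_j$.
   Context: A geometric lattice is a finite graded atomic lattice whose rank function satisfies the semimodular inequality. The order complex $\Delta(L)$ has the chains of $L-\{\hat 0,\hat 1\}$ as faces; facets correspond to maximal chains. Fix a linear order on the atoms; for a cover $x\lessdot y$ let $\lambda(x,y)$ be the least atom $a$ with $x\vee a=y$, and for a facet $F$ given by $\hat 0=x_0<\dots<x_{r+1}=\hat 1$ its minimal labeling is $\lambda(F)=(\lambda(x_0,x_1),\dots,\lambda(x_r,x_{r+1}))$. A basis is a set of $r+1$ atoms with join $\hat 1$; a circuit is a minimal dependent set of atoms; a broken circuit is a circuit minus its least element; an nbc-basis is a basis containing no broken circuit. The nbc-bases, each written as an increasing sequence, are ordered lexicographically: $B_1,\dots,B_m$. For an ordering $(b_1,\dots,b_{r+1})$ of a basis $B$, the associated facet is $b_1<b_1\vee b_2<\dots<b_1\vee\dots\vee b_r$ and its basis labeling is $(b_1,\dots,b_{r+1})$. $\Sigma_j$ is the union of the facets associated to all orderings of $B_j$, and $\Delta_j$ is the pure subcomplex of $\Sigma_j$ generated by those facets of $\Sigma_j$ whose minimal labeling coincides with their basis labeling. For $j\ge2$, $\Delta_j$ is an $(r-1)$-ball and $\partial\Delta_j$ denotes its boundary subcomplex. *)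

From mathcomp Require Import all_boot all_order.
Set Implicit Arguments. Unset Strict Implicit. Unset Printing Implicit Defensive.
Import Order.TTheory.
Local Open Scope order_scope.

Section GeomLattice.
Variables (disp : Order.disp_t) (L : finTBLatticeType disp).

Definition covers (x y : L) : bool :=
  (x < y) && [forall z : L, ~~ ((x < z) && (z < y))].

Definition atom (a : L) : bool := covers \bot a.

Definition is_rank (rk : L -> nat) : Prop :=
  rk \bot = 0%N /\ forall x y : L, covers x y -> rk y = (rk x).+1.

Definition atomic : Prop :=
  forall x : L, x = \join_(a | atom a && (a <= x)) a.

Definition semimodular (rk : L -> nat) : Prop :=
  forall x y : L, (rk (x `|` y) + rk (x `&` y) <= rk x + rk y)%N.

Definition geometric (rk : L -> nat) : Prop :=
  is_rank rk /\ atomic /\ semimodular rk.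

Definition atoms_set (S : {set L}) : bool := [forall a in S, atom a].

Definition joinS (S : {set L}) : L := \join_(a in S) a.

Definition dependent (rk : L -> nat) (S : {set L}) : bool :=
  atoms_set S && (rk (joinS S) < #|S|)%N.

Definition circuit (rk : L -> nat) (C : {set L}) : bool :=
  dependent rk C && [forall D : {set L}, (D \proper C) ==> ~~ dependent rk D].

(* lab : L -> nat encodes the linear order on atoms *)
Definition broken_circuit (rk : L -> nat) (lab : L -> nat) (D : {set L}) : bool :=
  [exists C : {set L}, circuit rk C &&
     [exists a in C, [forall b in C, (lab a <= lab b)%N] && (D == C :\ a)]].

Definition basis (n : nat) (B : {set L}) : bool :=
  atoms_set B && (#|B| == n) && (joinS B == \top).

Definition nbc_basis (rk : L -> nat) (lab : L -> nat) (n : nat) (B : {set L}) :=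
  basis n B && [forall D : {set L}, broken_circuit rk lab D ==> ~~ (D \subset B)].

Definition labseq (lab : L -> nat) (B : {set L}) : seq nat :=
  sort leq (map lab (enum B)).

Fixpoint lexlt (s t : seq nat) : bool :=
  match s, t with
  | x :: s', y :: t' => (x < y)%N || ((x == y) && lexlt s' t')
  | [::], _ :: _ => true
  | _, _ => false
  end.

Definition pjoin (s : seq L) (k : nat) : L := \join_(a <- take k s) a.

(* facet associated to an ordering (b_1,...,b_n) : b_1 < b_1 v b_2 < ... < b_1 v...v b_(n-1) *)
Definition assoc_facet n (s : n.-tuple L) : {set L} :=
  [set pjoin s (val k).+1 | k : 'I_n.-1].

Definition is_min_label (lab : L -> nat) (x y a : L) : bool :=
  [&& atom a, x `|` a == y &
      [forall b : L, (atom b && (x `|` b == y)) ==> (lab a <= lab b)%N]].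

(* minimal labeling of the facet associated to s (chain 0 < x_1 < ... < x_r < 1,
   with x_n = pjoin s n = 1 for a basis) coincides with the basis labeling s *)
Definition minlab_eq (lab : L -> nat) n (s : n.-tuple L) : bool :=
  [forall k : 'I_n, is_min_label lab (pjoin s k) (pjoin s k.+1) (tnth s k)].

(* abstract simplicial complexes on L as sets of faces *)
Definition generated (Fs : {set {set L}}) : {set {set L}} :=
  [set G : {set L} | [exists F in Fs, G \subset F]].

Definition is_ordering n (B : {set L}) (s : n.-tuple L) : bool := perm_eq s (enum B).

Definition Sigma n (B : {set L}) : {set {set L}} :=
  generated [set assoc_facet s | s : n.-tuple L & is_ordering B s].

Definition Delta (lab : L -> nat) n (B : {set L}) : {set {set L}} :=
  generated [set assoc_facet s | s : n.-tuple L & is_ordering B s && minlab_eq lab s].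

Definition facets (K : {set {set L}}) : {set {set L}} :=
  [set F in K | [forall G in K, (F \subset G) ==> (G == F)]].

(* boundary of a pure complex K whose facets have d vertices (dimension d-1):
   the subcomplex generated by the (d-1)-vertex faces lying in exactly one facet *)
Definition boundary (K : {set {set L}}) (d : nat) : {set {set L}} :=
  generated [set H in K | (#|H| == d.-1) && (#|[set F in facets K | H \subset F]| == 1)].

End GeomLattice.

From mathcomp Require Import all_boot all_order zify.
From mathcomp Require Import perm.
Set Implicit Arguments. Unset Strict Implicit. Unset Printing Implicit Defensive.
Import Order.TTheory.

(** Let [X_i] be the partial joins of an ordering [s] of a basis, so that the facet of
    [s] is the chain [X_1 < ... < X_r].  Among orderings of the same basis, the ridge
    omitting [X_(k+1)] can only be completed through [X_(k+1)] or through
    [Y = X_k \/ s_(k+1)].  Replacing [s_k, s_(k+1)] by [s_(k+1)] and the minimal label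
    [l] of [Y <. X_(k+2)] keeps the ordering minimally labelled.  If [l = s_k] this is
    the transposition of [s], so the ridge is interior to [Delta_B]; otherwise
    [lab l < lab s_k] and the new atoms form an nbc-basis lexicographically before [B]
    whose complex contains the ridge.  Hence the boundary lies in the earlier complexes.

    Conversely, let a face [G] of [Delta_B] lie in [Delta_B'] with [B'] before [B], and
    among the orderings of [B] in [Delta_B] whose facet contains [G] take one maximising
    [\sum_i i * lab s_i].  A descent [lab s_(k+1) < lab s_k] with [X_(k+1)] outside [G]
    cannot be transposable, as the transposition would increase the weight, so its
    ridge is a boundary ridge containing [G].  Such a descent exists: otherwise the
    labels increase from the last vertex [X_i0] of [G] up to the position where the
    lexicographic witness [a] of [B' < B] enters, so all these atoms and [a] lie in [B'],
    are independent over [X_i0] in [B'], and are too many for the rank available. *)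

Definition lex_witness (s t : seq nat) (x : nat) :=
  [/\ x \in s, x \notin t & {in t, forall y, y < x -> y \in s}].

Lemma lexlt_witness (s t : seq nat) : sorted leq t -> uniq s -> uniq t ->
  size s = size t -> lexlt s t -> exists x, lex_witness s t x.
Proof.
elim: s t => [|x s IH] [|y t] //= t_sort /andP[xs s_uniq] /andP[_ t_uniq] /succn_inj st.
have y_min : {in t, forall w, y <= w} by apply/allP; apply: order_path_min leq_trans t_sort.
case/orP => [xy|/andP[/eqP <- lt_st]].
  exists x; split; first exact: mem_head.
    rewrite inE negb_or (ltn_eqF xy); apply: contraTN xy => /y_min.
    by rewrite -leqNgt.
  move=> w; rewrite inE => /predU1P[->|/y_min yw wx]; first by rewrite ltnNge ltnW.
  by have := leq_ltn_trans yw (ltn_trans wx xy); rewrite ltnn.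
have [z [zs zt zmin]] := IH t (path_sorted t_sort) s_uniq t_uniq st lt_st.
exists z; split; first by rewrite inE zs orbT.
  by rewrite inE negb_or zt andbT; apply: contraNneq xs => <-.
move=> w; rewrite inE => /predU1P[->|wt] wz; first exact: mem_head.
by rewrite inE zmin ?orbT.
Qed.

Lemma witness_lexlt (s t : seq nat) : sorted leq s -> uniq s -> uniq t ->
  size s = size t -> (exists x, lex_witness s t x) -> lexlt s t.
Proof.
elim: s t => [|x s IH] [|y t] //=; first by move=> _ _ _ _ [x []].
move=> s_sort /andP[xs s_uniq] /andP[yt t_uniq] /succn_inj st [z [zs zt zmin]].
have x_min : {in x :: s, forall w, x <= w}.
  by apply/allP; rewrite /= leqnn; apply: order_path_min leq_trans s_sort.
case: (ltngtP x y) => [//|yx|xy] /=.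
  have /x_min := zmin y (mem_head y t) (leq_trans yx (x_min z zs)).
  by rewrite leqNgt yx.
apply: (IH t (path_sorted s_sort) s_uniq t_uniq st); exists z; split.
- by move: zs zt; rewrite !inE xy => /predU1P[->|//]; rewrite eqxx.
- by move: zt; rewrite inE negb_or => /andP[].
move=> w wt wz; have := zmin w; rewrite inE wt orbT => /(_ isT wz).
by rewrite inE => /predU1P[wy|//]; rewrite -xy -wy wt in yt.
Qed.

Lemma lexlt_irr (l : seq nat) : lexlt l l = false.
Proof. by elim: l => //= x l ->; rewrite ltnn eqxx. Qed.

Local Open Scope order_scope.

Section GeometricLattice.
Variables (disp : Order.disp_t) (L : finTBLatticeType disp) (rk : L -> nat) (lab : L -> nat).
Hypothesis rk_geom : geometric rk.
Hypothesis lab_inj : {in [pred a | atom a] &, injective lab}.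
Implicit Types (a b x y z : L) (B D G H F T : {set L}).

Lemma rank0 : rk \bot = 0%N.
Proof. by case: rk_geom => [[]]. Qed.

Lemma rank_cover x y : covers x y -> rk y = (rk x).+1.
Proof. by case: rk_geom => [[_ rkS]] _; apply: rkS. Qed.

Lemma rank_lt x y : x < y -> (rk x < rk y)%N.
Proof.
have [n] := ubnP #|[set z | x < z & z <= y]|.
elim: n x y => // n IH x y lt_card xy.
have [/rank_cover->//|] := boolP (covers x y).
rewrite /covers xy => /forallPn[z]; rewrite negbK => /andP[xz zy].
have sub_xz : [set w | x < w & w <= z] \proper [set w | x < w & w <= y].
  apply/properP; split; last by exists y; rewrite !inE ?xy ?lexx // lt_geF.
  by apply/subsetP => w; rewrite !inE => /andP[-> wz]; apply: le_trans wz (ltW zy).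
have sub_zy : [set w | z < w & w <= y] \proper [set w | x < w & w <= y].
  apply/properP; split; last by exists z; rewrite !inE ?xz ?(ltW zy) // ltxx.
  by apply/subsetP => w; rewrite !inE => /andP[zw ->]; rewrite (lt_trans xz zw).
have lt_xz := IH x z (leq_trans (proper_card sub_xz) lt_card) xz.
exact: ltn_trans lt_xz (IH z y (leq_trans (proper_card sub_zy) lt_card) zy).
Qed.

Lemma rank_le x y : x <= y -> (rk x <= rk y)%N.
Proof. by rewrite le_eqVlt => /orP[/eqP->//|/rank_lt/ltnW]. Qed.

Lemma le_rank_eq x y : x <= y -> rk x = rk y -> x = y.
Proof. by rewrite le_eqVlt => /orP[/eqP//|/rank_lt + e]; rewrite e ltnn. Qed.

Lemma atom_gt0 a : atom a -> \bot < a.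
Proof. by case/andP. Qed.

Lemma rank_atom a : atom a -> rk a = 1%N.
Proof. by move/rank_cover->; rewrite rank0. Qed.

Lemma meet_atom a x : atom a -> ~~ (a <= x) -> x `&` a = \bot.
Proof.
move=> /andP[_ /forallP /(_ (x `&` a))]; rewrite negb_and !lt_neqAle le0x leIr.
by rewrite !andbT !negbK => /orP[/eqP<-//|/eqP <-]; rewrite leIl.
Qed.

Lemma rank_joinA_le a x : atom a -> (rk (x `|` a) <= (rk x).+1)%N.
Proof.
move=> aa; have [ax|nax] := boolP (a <= x); first by rewrite (join_idPl ax).
have := rk_geom.2.2 x a.
by rewrite meet_atom // rank0 addn0 (rank_atom aa) addn1.
Qed.

Lemma rank_joinA a x : atom a -> ~~ (a <= x) -> rk (x `|` a) = (rk x).+1.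
Proof.
move=> aa nax; apply/eqP; rewrite eqn_leq rank_joinA_le //=.
apply: rank_lt; rewrite lt_neqAle leUl andbT; apply: contraNneq nax => ->.
exact: leUr.
Qed.

Lemma cover_joinA x y b : x <= y -> rk y = (rk x).+1 -> atom b ->
  (x `|` b == y) = (b <= y) && ~~ (b <= x).
Proof.
move=> xy rky ab; apply/eqP/andP => [xby|[bly nbx]].
  rewrite -xby in rky *; split; first exact: leUr.
  by apply/negP => /join_idPl bx; move: rky; rewrite bx => /n_Sn.
by apply: le_rank_eq; rewrite ?leUx ?xy ?bly // rank_joinA.
Qed.

Lemma is_min_labelP x y a : x <= y -> rk y = (rk x).+1 ->
  reflect [/\ atom a, a <= y, ~~ (a <= x) &
           forall b, atom b -> b <= y -> ~~ (b <= x) -> (lab a <= lab b)%N]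
    (is_min_label lab x y a).
Proof.
move=> xy rky; apply: (iffP and3P) => [[aa]|[aa ay nax amin]].
  rewrite cover_joinA // => /andP[ay nax] /forallP amin; split=> // b ab bly nbx.
  by have := amin b; rewrite ab cover_joinA // bly nbx; apply.
split; rewrite ?cover_joinA ?aa ?ay //; apply/forallP => b.
by apply/implyP => /andP[ab]; rewrite cover_joinA // => /andP[]; apply: amin.
Qed.

Lemma min_label_exists x y b : atom b -> x `|` b = y ->
  exists a, is_min_label lab x y a.
Proof.
move=> ab xby; have Pb : atom b && (x `|` b == y) by rewrite ab xby eqxx.
case: (arg_minnP (P := fun c => atom c && (x `|` c == y)) lab Pb).
move=> a /andP[aa axy] amin; exists a.
by rewrite /is_min_label aa axy; apply/forallP => c; apply/implyP/amin.
Qed.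

Lemma atoms_set_atom B a : atoms_set B -> a \in B -> atom a.
Proof. by move=> /forallP/(_ a)/implyP. Qed.

Lemma labseq_mem B a : atoms_set B -> atom a ->
  (lab a \in labseq lab B) = (a \in B).
Proof.
move=> aB aa; rewrite /labseq mem_sort; apply/mapP/idP.
  case=> b; rewrite mem_enum => bB e.
  by rewrite (lab_inj _ _ e) // inE; apply: (atoms_set_atom aB).
by move=> h; exists a; rewrite ?mem_enum.
Qed.

Lemma labseq_sorted B : sorted leq (labseq lab B).
Proof. by apply: sort_sorted; exact: leq_total. Qed.

Lemma labseq_uniq B : atoms_set B -> uniq (labseq lab B).
Proof.
move=> aB; rewrite /labseq sort_uniq map_inj_in_uniq ?enum_uniq //.
move=> x y; rewrite !mem_enum => xB yB.
by apply: lab_inj; rewrite inE; apply: (atoms_set_atom aB).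
Qed.

Lemma labseq_size B : size (labseq lab B) = #|B|.
Proof. by rewrite /labseq size_sort size_map cardE. Qed.

Lemma lexlt_labseqP B B' : atoms_set B -> atoms_set B' -> #|B| = #|B'| ->
  lexlt (labseq lab B') (labseq lab B) <->
  exists a, [/\ a \in B', a \notin B & forall b, b \in B -> (lab b < lab a)%N -> b \in B'].
Proof.
move=> aB aB' cB; have mem_lab C c : c \in labseq lab C -> exists2 a, a \in C & c = lab a.
  by rewrite mem_sort => /mapP[a]; rewrite mem_enum; exists a.
split.
  move/lexlt_witness; rewrite !labseq_size labseq_sorted !labseq_uniq //.
  case=> // x [/mem_lab[a aB'a ->]]; have aa := atoms_set_atom aB' aB'a.
  rewrite labseq_mem // => aBa lt_a; exists a; split=> // b bB lt_b.
  by rewrite -labseq_mem ?(atoms_set_atom aB) // lt_a ?labseq_mem ?(atoms_set_atom aB).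
case=> a [aB'a aBa lt_a]; have aa := atoms_set_atom aB' aB'a.
apply: witness_lexlt; rewrite ?labseq_sorted ?labseq_uniq ?labseq_size //.
exists (lab a); split; rewrite ?labseq_mem // => _ /mem_lab[b bB ->] lt_b.
by rewrite labseq_mem ?lt_a ?(atoms_set_atom aB).
Qed.

Lemma circuit_le_joinS_D1 C c : circuit rk C -> c \in C -> c <= joinS (C :\ c).
Proof.
case/andP => /andP[aC dC] /forallP/(_ (C :\ c)) minC cC; apply: contraT => nc.
have aC' : atoms_set (C :\ c).
  by apply/forallP => x; apply/implyP => /setD1P[_]; apply: atoms_set_atom.
move: minC; rewrite properD1 //= /dependent aC' /= -leqNgt.
move: dC; rewrite /dependent /joinS (big_setD1 _ cC) /= joinC -/(joinS (C :\ c)).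
rewrite rank_joinA ?(atoms_set_atom aC) // (cardsD1 c C) cC add1n ltnS => lt le.
by have := leq_trans lt le; rewrite ltnn.
Qed.

Lemma boundary_generated_sub (Fs : {set {set L}}) d G :
  G \in boundary (generated Fs) d -> G \in generated Fs.
Proof.
rewrite inE => /existsP[H /andP[]]; rewrite !inE => /andP[/existsP[F /andP[FF HF]] _] GH.
by apply/existsP; exists F; rewrite FF (subset_trans GH HF).
Qed.

Section PartialJoins.
Variable m : nat.
Implicit Types s t : m.-tuple L.

Lemma pjoinE s k : pjoin s k = \join_(i < m | (i < k)%N) tnth s i.
Proof.
elim: k => [|k IH]; first by rewrite /pjoin take0 big_nil big_pred0.
have [km|mk] := ltnP k m; last first.
  rewrite /pjoin !take_oversize ?size_tuple ?(leq_trans mk) // in IH *.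
  rewrite IH; apply: eq_bigl => i; have ik := leq_trans (ltn_ord i) mk.
  by rewrite ik ltnS ltnW.
rewrite /pjoin (take_nth \bot) ?size_tuple // big_rcons -/(pjoin s k) IH.
rewrite [RHS](bigD1 (Ordinal km)) //= joinC (tnth_nth \bot); congr (_ `|` _).
by apply: eq_bigl => i; rewrite ltnS -val_eqE /= andbC -ltn_neqAle.
Qed.

Lemma pjoin0 s : pjoin s 0 = \bot.
Proof. by rewrite pjoinE big_pred0. Qed.

Lemma pjoinS s (i : 'I_m) : pjoin s i.+1 = pjoin s i `|` tnth s i.
Proof.
rewrite !pjoinE (bigD1 i) //= joinC; congr (_ `|` _).
by apply: eq_bigl => j; rewrite ltnS andbC -ltn_neqAle.
Qed.

Lemma le_pjoin s j k : (j <= k)%N -> pjoin s j <= pjoin s k.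
Proof.
by move=> jk; rewrite !pjoinE; apply/joinsP => i ij; apply/joins_sup/(leq_trans ij).
Qed.

Lemma tnth_le_pjoin s (i : 'I_m) k : (i < k)%N -> tnth s i <= pjoin s k.
Proof. by move=> ik; rewrite pjoinE; apply: joins_sup. Qed.

Lemma mem_take_le_pjoin s k x : x \in take k s -> x <= pjoin s k.
Proof. by move=> xs; apply: joins_sup_seq. Qed.

Lemma eq_pjoin s t k : (forall i : 'I_m, (i < k)%N -> tnth s i = tnth t i) ->
  pjoin s k = pjoin t k.
Proof. by move=> est; rewrite !pjoinE; apply: eq_bigr. Qed.

Lemma eq_pjoin_above s t j k : (j <= k)%N -> pjoin s j = pjoin t j ->
  (forall i : 'I_m, (j <= i)%N -> tnth s i = tnth t i) -> pjoin s k = pjoin t k.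
Proof.
move=> jk ej est; have split_at (u : m.-tuple L) : pjoin u k =
    pjoin u j `|` \join_(i < m | (j <= i < k)%N) tnth u i.
  rewrite !pjoinE (bigID (fun i : 'I_m => (i < j)%N)) /=; congr (_ `|` _).
    apply: eq_bigl => i; apply/andP/idP => [[]//|ij].
    by split=> //; apply: leq_trans ij jk.
  by apply: eq_bigl => i; rewrite -leqNgt andbC.
by rewrite !split_at ej; congr (_ `|` _); apply: eq_bigr => i /andP[/est].
Qed.

Lemma pjoin_ordering s B : is_ordering B s -> pjoin s m = joinS B.
Proof.
by move=> os; rewrite /pjoin take_oversize ?size_tuple // (perm_big _ os) big_enum.
Qed.

Lemma joinS_le_pjoin s k D : D \subset [set x in take k s] -> joinS D <= pjoin s k.
Proof.
by move=> /subsetP Dk; apply/joinsP => x /Dk; rewrite inE; apply: mem_take_le_pjoin.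
Qed.

Lemma last_index_in s D : D != set0 -> D \subset [set x in s] ->
  exists i : 'I_m, tnth s i \in D /\ D :\ tnth s i \subset [set x in take i s].
Proof.
move=> /set0Pn[x0 xD0] Ds; have Dm : exists k, D \subset [set x in take k s].
  by exists m; rewrite take_oversize ?size_tuple.
case: (ex_minnP Dm) => [[|k]] Dk kmin.
  by have := subsetP Dk x0 xD0; rewrite inE take0.
have km : (k < m)%N by apply: kmin; rewrite take_oversize ?size_tuple.
have takeS : take k.+1 s = rcons (take k s) (tnth s (Ordinal km)).
  by rewrite (take_nth \bot) ?size_tuple // (tnth_nth \bot).
have Dk' x : x \in D -> (x == tnth s (Ordinal km)) || (x \in take k s).
  by move/(subsetP Dk); rewrite inE takeS mem_rcons inE.
exists (Ordinal km); split.
  apply: contraT => sD; have /kmin : D \subset [set x in take k s].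
    apply/subsetP => x xD; rewrite inE; case/orP: (Dk' x xD) => // /eqP xs.
    by rewrite -xs xD in sD.
  by rewrite ltnn.
by apply/subsetP => x /setD1P[xs /Dk']; rewrite inE (negbTE xs).
Qed.

End PartialJoins.

Lemma mem_ordering n B (s : n.-tuple L) x : is_ordering B s -> (x \in s) = (x \in B).
Proof. by move=> os; rewrite (perm_mem os) mem_enum. Qed.

Lemma ordering_set_tuple n (s : n.-tuple L) : uniq s -> is_ordering [set x in s] s.
Proof. by move=> us; apply: uniq_perm; rewrite ?enum_uniq // => x; rewrite mem_enum inE. Qed.

Section FixedRank.
Variable r : nat.
Hypothesis rank_top : rk \top = r.+1.

Definition spanning (s : r.+1.-tuple L) := all (@atom _ L) s && (pjoin s r.+1 == \top).

Section Spanning.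
Variable s : r.+1.-tuple L.
Hypothesis s_span : spanning s.

Lemma spanning_atom i : atom (tnth s i).
Proof. by case/andP: s_span => /all_tnthP. Qed.

Lemma spanning_top : pjoin s r.+1 = \top.
Proof. by case/andP: s_span => _ /eqP. Qed.

Lemma rank_pjoin_addn k d : (k + d <= r.+1)%N ->
  (rk (pjoin s (k + d)) <= rk (pjoin s k) + d)%N.
Proof.
elim: d => [|d IH] kd; first by rewrite !addn0.
have kdr : (k + d < r.+1)%N by rewrite -addnS.
rewrite addnS (pjoinS s (Ordinal kdr)) /=.
apply: leq_trans (rank_joinA_le _ (spanning_atom _)) _.
by rewrite addnS ltnS IH // ltnW.
Qed.

Lemma rank_pjoin k : (k <= r.+1)%N -> rk (pjoin s k) = k.
Proof.
move=> kr; have := @rank_pjoin_addn k (r.+1 - k); have := @rank_pjoin_addn 0 k.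
rewrite subnKC // pjoin0 rank0 spanning_top rank_top !add0n.
by move=> /(_ kr) ub /(_ (leqnn _)); lia.
Qed.

Lemma pjoin_inj j k : (j <= r.+1)%N -> (k <= r.+1)%N -> pjoin s j = pjoin s k -> j = k.
Proof. by move=> jr kr ejk; rewrite -(rank_pjoin jr) -(rank_pjoin kr) ejk. Qed.

Lemma tnth_notin_pjoin (i : 'I_r.+1) k : (k <= i)%N -> ~~ (tnth s i <= pjoin s k).
Proof.
move=> ki; apply/negP => sik.
have e : pjoin s i.+1 = pjoin s i by rewrite pjoinS join_l // (le_trans sik) ?le_pjoin.
by move/esym/n_Sn: (pjoin_inj (ltn_ord i) (ltnW (ltn_ord i)) e).
Qed.

Lemma spanning_uniq : uniq s.
Proof.
apply/tuple_uniqP => i j eij; case: (ltngtP i j) => [ij|ji|/val_inj//].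
  by have := tnth_notin_pjoin (leqnn j); rewrite -eij tnth_le_pjoin.
by have := tnth_notin_pjoin (leqnn i); rewrite eij tnth_le_pjoin.
Qed.

Lemma rank_pjoinS (i : 'I_r.+1) : rk (pjoin s i.+1) = (rk (pjoin s i)).+1.
Proof. by rewrite !rank_pjoin // ltnW. Qed.

Lemma minlab_le (i : 'I_r.+1) b : minlab_eq lab s ->
  atom b -> b <= pjoin s i.+1 -> ~~ (b <= pjoin s i) -> (lab (tnth s i) <= lab b)%N.
Proof.
move=> /forallP/(_ i)/(is_min_labelP _ (le_pjoin s (leqnSn i)) (rank_pjoinS i)).
by case=> _ _ _; apply.
Qed.

End Spanning.

Lemma ordering_spanning B (s : r.+1.-tuple L) : basis r.+1 B -> is_ordering B s -> spanning s.
Proof.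
case/andP => /andP[aB _] /eqP jB os; rewrite /spanning (pjoin_ordering os) jB eqxx andbT.
by apply/allP => x; rewrite (mem_ordering _ os); apply: atoms_set_atom.
Qed.

Lemma spanning_basis (s : r.+1.-tuple L) : spanning s -> basis r.+1 [set x in s].
Proof.
move=> s_span; have os := ordering_set_tuple (spanning_uniq s_span).
rewrite /basis -andbA; apply/and3P; split.
- apply/forallP => x; apply/implyP; rewrite inE => /tnthP[i ->].
  exact: spanning_atom.
- by rewrite cardsE (card_uniqP (spanning_uniq s_span)) size_tuple.
- by rewrite -(pjoin_ordering os) spanning_top.
Qed.

(* If a broken circuit [C :\ a] lay in [s], its last atom [s_i] and [a] would both
   label the step [X_i <. X_(i+1)], and minimality on both sides forces [s_i = a]. *)
Lemma minlab_nbc_basis (s : r.+1.-tuple L) : spanning s -> minlab_eq lab s ->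
  nbc_basis rk lab r.+1 [set x in s].
Proof.
move=> s_span s_min; rewrite /nbc_basis spanning_basis //=.
apply/forallP => D; apply/implyP => /existsP[C /andP[cC /existsP[a]]].
case/and3P=> aC /forallP amin /eqP eD; apply/negP => Ds.
have atC x : x \in C -> atom x by case/andP: cC => /andP[aC' _] _; apply: atoms_set_atom.
have D0 : D != set0.
  apply: contraTneq (circuit_le_joinS_D1 cC aC) => D0.
  by rewrite -eD D0 /joinS big_set0 lt_geF ?atom_gt0 ?atC.
have [i [siD Di]] := last_index_in D0 Ds.
have Cs : C :\ tnth s i \subset a |: (D :\ tnth s i).
  by apply/subsetP => x /setD1P[xs xC]; rewrite !inE xs eD !inE xC andbT orbN.
have aY : a <= pjoin s i.+1.
  apply: le_trans (circuit_le_joinS_D1 cC aC) _; rewrite -eD joinS_le_pjoin //.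
  apply/subsetP => x xD; rewrite (take_nth \bot) ?size_tuple // -(tnth_nth \bot).
  rewrite inE mem_rcons inE; have [//|xs] := eqVneq x (tnth s i).
  by move: (subsetP Di x); rewrite !inE xs xD; apply.
have siC : tnth s i \in C by move: siD; rewrite eD => /setD1P[].
have aX : ~~ (a <= pjoin s i).
  apply: contra (tnth_notin_pjoin s_span (leqnn i)) => aX.
  apply: le_trans (circuit_le_joinS_D1 cC siC) _.
  apply/joinsP => x /(subsetP Cs) /setU1P[->//|/(subsetP Di)].
  by rewrite inE; apply: mem_take_le_pjoin.
have sia : tnth s i = a.
  apply: lab_inj; rewrite ?inE ?spanning_atom ?atC //; apply/eqP; rewrite eqn_leq.
  by rewrite minlab_le ?atC // (implyP (amin _)).
by move: siD; rewrite eD sia setD11.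
Qed.

Definition good_ordering B (s : r.+1.-tuple L) := is_ordering B s && minlab_eq lab s.

Lemma good_ordering_spanning B s : basis r.+1 B -> good_ordering B s -> spanning s.
Proof. by move=> bB /andP[os _]; apply: ordering_spanning os. Qed.

Lemma DeltaP B G :
  reflect (exists2 s, good_ordering B s & G \subset assoc_facet s) (G \in Delta lab r.+1 B).
Proof.
rewrite inE; apply: (iffP existsP) => [[F /andP[/imsetP[s]]]|[s gs Gs]].
  by rewrite inE => gs -> Gs; exists s.
by exists (assoc_facet s); rewrite Gs andbT; apply/imsetP; exists s; rewrite ?inE.
Qed.

Lemma mem_assoc_facet (s : r.+1.-tuple L) x :
  (x \in assoc_facet s) = [exists k : 'I_r, x == pjoin s k.+1].
Proof. by apply/imsetP/existsP => [[k _ ->]|[k /eqP->]]; exists k. Qed.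

Lemma pjoin_in_facet (s : r.+1.-tuple L) j : (0 < j <= r)%N -> pjoin s j \in assoc_facet s.
Proof. by case: j => // j jr; rewrite mem_assoc_facet; apply/existsP; exists (Ordinal jr). Qed.

Section Facet.
Variable s : r.+1.-tuple L.
Hypothesis s_span : spanning s.

Lemma facet_pjoin_rank x : x \in assoc_facet s -> x = pjoin s (rk x).
Proof.
rewrite mem_assoc_facet => /existsP[k /eqP->].
by rewrite (@rank_pjoin _ s_span k.+1 (ltnW (ltn_ord k))).
Qed.

Lemma card_assoc_facet : #|assoc_facet s| = r.
Proof.
rewrite card_imset ?card_ord // => i j /(pjoin_inj s_span) eij.
by apply/val_inj/eq_add_S/eij; apply/leqW/ltn_ord.
Qed.

End Facet.

Lemma facetsP B F : basis r.+1 B ->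
  reflect (exists2 s, good_ordering B s & F = assoc_facet s) (F \in facets (Delta lab r.+1 B)).
Proof.
move=> bB; rewrite inE; apply: (iffP andP) => [[/DeltaP[s gs Fs] /forallP maxF]|[s gs ->]].
  have sD : assoc_facet s \in Delta lab r.+1 B by apply/DeltaP; exists s.
  by exists s => //; move: (maxF (assoc_facet s)); rewrite sD Fs => /eqP.
split; first by apply/DeltaP; exists s.
apply/forallP => G; apply/implyP => /DeltaP[t gt Gt]; apply/implyP => sG.
have e : assoc_facet s = assoc_facet t.
  apply/eqP; rewrite eqEcard (subset_trans sG Gt) /=.
  by rewrite !card_assoc_facet // (good_ordering_spanning bB).
by rewrite eqEsubset sG e Gt.
Qed.

Definition ridge (s : r.+1.-tuple L) (k : nat) := assoc_facet s :\ pjoin s k.+1.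

Lemma card_ridge (s : r.+1.-tuple L) k : spanning s -> (k < r)%N -> #|ridge s k| = r.-1.
Proof.
move=> s_span kr; have := cardsD1 (pjoin s k.+1) (assoc_facet s).
by rewrite pjoin_in_facet ?card_assoc_facet //= add1n => ->.
Qed.

Lemma ridge_subset (s t : r.+1.-tuple L) k :
  (forall j, (0 < j <= r)%N -> j != k.+1 -> pjoin t j = pjoin s j) ->
  ridge s k \subset assoc_facet t.
Proof.
move=> est; apply/subsetP => x /setD1P[xk].
rewrite mem_assoc_facet => /existsP[j /eqP xj]; rewrite xj in xk *.
have jk : j.+1 != k.+1 by apply: contraNneq xk => ->.
by rewrite -est ?pjoin_in_facet ?ltn_ord.
Qed.

Lemma ridge_agree (s t : r.+1.-tuple L) (k : 'I_r) : spanning s -> spanning t ->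
  ridge s k \subset assoc_facet t ->
  forall j, (j <= r.+1)%N -> j != k.+1 -> pjoin t j = pjoin s j.
Proof.
move=> s_span t_span sub [|j] jr jk; first by rewrite !pjoin0.
have [->|jr'] := eqVneq j r; first by rewrite !spanning_top.
have sj : pjoin s j.+1 \in ridge s k.
  rewrite !inE pjoin_in_facet ?ltn_neqAle ?jr' ?andbT //.
  by apply: contra jk => /eqP/(pjoin_inj s_span jr (leqW (ltn_ord k))) ->.
by rewrite (facet_pjoin_rank t_span (subsetP sub _ sj)) rank_pjoin.
Qed.

Lemma eq_assoc_facet (s t : r.+1.-tuple L) :
  (forall j, (0 < j <= r)%N -> pjoin t j = pjoin s j) -> assoc_facet t = assoc_facet s.
Proof. by move=> est; apply: eq_imset => j; rewrite est ?ltn_ord. Qed.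

Definition replace_adj (s : r.+1.-tuple L) (k : nat) (u v : L) : r.+1.-tuple L :=
  [tuple if val i == k then u else if val i == k.+1 then v else tnth s i | i < r.+1].

Section ReplaceAdjacent.
Variables (s : r.+1.-tuple L) (k : nat) (u v : L).
Hypothesis kr : (k < r)%N.
Let t := replace_adj s k u v.

Lemma tnth_replace_adj i :
  tnth t i = if val i == k then u else if val i == k.+1 then v else tnth s i.
Proof. exact: tnth_mktuple. Qed.

Lemma pjoin_replace_adj_lo j : (j <= k)%N -> pjoin t j = pjoin s j.
Proof.
move=> jk; apply: eq_pjoin => i ij; rewrite tnth_replace_adj.
by rewrite !ltn_eqF // (leq_trans ij) // ltnW.
Qed.

Lemma pjoin_replace_adj_mid : pjoin t k.+1 = pjoin s k `|` u.
Proof.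
rewrite (pjoinS t (@Ordinal r.+1 k (ltnW kr))) pjoin_replace_adj_lo //.
by rewrite tnth_replace_adj /= eqxx.
Qed.

Hypothesis uv_top : pjoin s k `|` u `|` v = pjoin s k.+2.

Lemma pjoin_replace_adj j : j != k.+1 -> pjoin t j = pjoin s j.
Proof.
move=> jk; have [|kj] := leqP j k; first exact: pjoin_replace_adj_lo.
have k2j : (k.+2 <= j)%N by rewrite ltn_neqAle eq_sym jk.
apply: (eq_pjoin_above k2j).
  rewrite (pjoinS t (@Ordinal r.+1 k.+1 kr)) pjoin_replace_adj_mid tnth_replace_adj /=.
  by rewrite eqxx (gtn_eqF (ltnSn k)).
by move=> i ki; rewrite tnth_replace_adj !gtn_eqF // (leq_trans (leqnSn _) ki).
Qed.

End ReplaceAdjacent.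

Section ReplaceAdjacentMinlab.
Variables (s : r.+1.-tuple L) (k : nat) (u v : L).
Hypotheses (s_span : spanning s) (s_min : minlab_eq lab s) (kr : (k < r)%N).
Hypothesis u_min : is_min_label lab (pjoin s k) (pjoin s k `|` u) u.
Hypothesis v_min : is_min_label lab (pjoin s k `|` u) (pjoin s k.+2) v.

Let uv_top : pjoin s k `|` u `|` v = pjoin s k.+2.
Proof. by case/and3P: v_min => _ /eqP. Qed.

Lemma replace_adj_spanning : spanning (replace_adj s k u v).
Proof.
apply/andP; split; last by rewrite pjoin_replace_adj ?(spanning_top s_span) // eqSS gtn_eqF.
apply/all_tnthP => i; rewrite tnth_replace_adj.
case: ifP => [_|_]; first by case/and3P: u_min.
by case: ifP => _; [case/and3P: v_min | apply: spanning_atom].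
Qed.

Lemma replace_adj_minlab : minlab_eq lab (replace_adj s k u v).
Proof.
apply/forallP => i; rewrite tnth_replace_adj.
case: (ltngtP i k) => [ik|ki|ik].
- rewrite (ltn_eqF (leqW ik)) !pjoin_replace_adj_lo // ?(ltnW ik) //.
  exact: (forallP s_min i).
- case: (ltngtP i k.+1) => [|k1i|ik1]; first by rewrite ltnS leqNgt ki.
  + rewrite !pjoin_replace_adj // ?eqSS ?(gtn_eqF k1i) ?(gtn_eqF (ltnW k1i)) //.
    exact: (forallP s_min i).
  + by rewrite ik1 pjoin_replace_adj_mid // pjoin_replace_adj // (gtn_eqF (ltnSn k.+1)).
- by rewrite ik pjoin_replace_adj_lo // pjoin_replace_adj_mid.
Qed.

End ReplaceAdjacentMinlab.

Definition lower_ord (k : 'I_r) : 'I_r.+1 := widen_ord (leqnSn r) k.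
Definition upper_ord (k : 'I_r) : 'I_r.+1 := @Ordinal r.+1 k.+1 (ltn_ord k).

Definition swap_adj (s : r.+1.-tuple L) (k : 'I_r) :=
  replace_adj s k (tnth s (upper_ord k)) (tnth s (lower_ord k)).

Definition swap_minimal (s : r.+1.-tuple L) (k : 'I_r) :=
  is_min_label lab (pjoin s k `|` tnth s (upper_ord k)) (pjoin s k.+2) (tnth s (lower_ord k)).

Lemma swap_adj_perm (s : r.+1.-tuple L) (k : 'I_r) : perm_eq (swap_adj s k) s.
Proof.
apply/tuple_permP; exists (tperm (lower_ord k) (upper_ord k)).
congr tval; apply: eq_from_tnth => i; rewrite tnth_replace_adj tnth_mktuple.
have [ik|ik] := eqVneq (val i) k.
  by rewrite (_ : i = lower_ord k) ?tpermL //; apply: val_inj.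
have [ik1|ik1] := eqVneq (val i) k.+1.
  by rewrite (_ : i = upper_ord k) ?tpermR //; apply: val_inj.
by rewrite tpermD // -val_eqE eq_sym ?ik ?ik1.
Qed.

Definition weight (s : r.+1.-tuple L) := (\sum_(i < r.+1) i * lab (tnth s i))%N.

Lemma weight_swap_lt (s : r.+1.-tuple L) (k : 'I_r) :
  (lab (tnth s (upper_ord k)) < lab (tnth s (lower_ord k)))%N ->
  (weight s < weight (swap_adj s k))%N.
Proof.
set u := tnth s (lower_ord k); set v := tnth s (upper_ord k); set t := swap_adj s k => vu.
have ne : upper_ord k != lower_ord k by rewrite -val_eqE /= (gtn_eqF (ltnSn k)).
have split_weight w : weight w = (k * lab (tnth w (lower_ord k)) +
    k.+1 * lab (tnth w (upper_ord k)) +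
    \sum_(i < r.+1 | (i != lower_ord k) && (i != upper_ord k)) i * lab (tnth w i))%N.
  rewrite /weight (bigD1 (lower_ord k)) //= (bigD1 (upper_ord k)) //= addnA.
  by congr (_ + _)%N; apply: eq_bigl => i; rewrite andbC.
rewrite !split_weight.
have -> : (\sum_(i < r.+1 | (i != lower_ord k) && (i != upper_ord k)) i * lab (tnth t i) =
    \sum_(i < r.+1 | (i != lower_ord k) && (i != upper_ord k)) i * lab (tnth s i))%N.
  apply: eq_bigr => i /andP[ilo ihi]; rewrite tnth_replace_adj.
  by rewrite -!(inj_eq val_inj) /= in ilo ihi; rewrite (negbTE ilo) (negbTE ihi).
rewrite !tnth_replace_adj /= eqxx (gtn_eqF (ltnSn k)) eqxx -/u -/v; nia.
Qed.

Section AdjacentPair.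
Variables (s : r.+1.-tuple L) (k : 'I_r).
Hypotheses (s_span : spanning s) (s_min : minlab_eq lab s).
Local Notation X0 := (pjoin s k).
Local Notation X1 := (pjoin s k.+1).
Local Notation X2 := (pjoin s k.+2).
Local Notation u := (tnth s (lower_ord k)).
Local Notation v := (tnth s (upper_ord k)).
(* [Y] is the element of rank [k.+1] between [X0] and [X2] reached by adding [v] first. *)
Local Notation Y := (pjoin s k `|` tnth s (upper_ord k)).

Let rank_X0 : rk X0 = k.
Proof. exact: (rank_pjoin s_span (leqW (ltnW (ltn_ord k)))). Qed.

Let rank_X1 : rk X1 = k.+1.
Proof. exact: (@rank_pjoin _ s_span k.+1 (ltnW (ltn_ord k))). Qed.

Let rank_X2 : rk X2 = k.+2.
Proof. exact: (@rank_pjoin _ s_span k.+2 (ltn_ord k)). Qed.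

Let X1E : X1 = X0 `|` u.
Proof. exact: pjoinS s (lower_ord k). Qed.

Let v_notin_X0 : ~~ (v <= X0).
Proof. exact: tnth_notin_pjoin. Qed.

Lemma rank_pair_join : rk Y = k.+1.
Proof. by rewrite (rank_joinA (spanning_atom s_span _) v_notin_X0) rank_X0. Qed.

Lemma pair_join_neq : Y != X1.
Proof.
apply: contraNneq (tnth_notin_pjoin s_span (leqnn (upper_ord k))) => <-.
exact: leUr.
Qed.

Lemma le_pair_join : Y <= X2.
Proof. by rewrite leUx le_pjoin ?(leqW (leqnSn k)) //=; apply: tnth_le_pjoin => /=. Qed.

Lemma lower_notin_pair_join : ~~ (u <= Y).
Proof.
apply: contra pair_join_neq => uY; apply/eqP/esym/le_rank_eq.
  by rewrite X1E leUx leUl uY.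
by rewrite rank_pair_join rank_X1.
Qed.

Lemma pair_join_lower : Y `|` u = X2.
Proof.
apply: le_rank_eq; last first.
  by rewrite rank_joinA ?spanning_atom ?lower_notin_pair_join ?rank_pair_join.
have uX1 : u <= X1 by rewrite X1E leUr.
by rewrite leUx le_pair_join (le_trans uX1) ?le_pjoin.
Qed.

Lemma min_label_pair_join : is_min_label lab X0 Y v.
Proof.
apply/is_min_labelP; rewrite ?leUl ?rank_pair_join ?rank_X0 //.
split; rewrite ?spanning_atom ?leUr // => b ab bY bX0.
have [bX1|bX1] := boolP (b <= X1).
  have e1 : X0 `|` b = X1.
    by apply/eqP; rewrite cover_joinA ?bX1 ?bX0 ?le_pjoin ?rank_X1 ?rank_X0.
  have e2 : X0 `|` b = Y.
    by apply/eqP; rewrite cover_joinA ?bY ?bX0 ?leUl ?rank_pair_join ?rank_X0.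
  by move/eqP: pair_join_neq; rewrite -e1 -e2.
apply: (minlab_le s_span (i := upper_ord k)) => //; exact: le_trans bY le_pair_join.
Qed.

Let rank_pair_cover : rk X2 = (rk Y).+1.
Proof. by rewrite rank_X2 rank_pair_join. Qed.

Lemma pair_join_notin_facet : Y \notin assoc_facet s.
Proof.
apply: contraNN pair_join_neq => /(facet_pjoin_rank s_span) Yr.
by rewrite Yr rank_pair_join.
Qed.

Lemma tnth_in_pair (j : 'I_r.+1) : tnth s j <= X2 -> ~~ (tnth s j <= X0) ->
  j = lower_ord k \/ j = upper_ord k.
Proof.
move=> jX2 jX0; case: (ltngtP j k) => [jk|kj|jk].
- by rewrite tnth_le_pjoin in jX0.
- case: (ltngtP j k.+1) => [|k1j|jk1]; first by rewrite ltnS leqNgt kj.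
    by rewrite (negbTE (tnth_notin_pjoin s_span k1j)) in jX2.
  by right; apply: val_inj.
- by left; apply: val_inj.
Qed.

Section Exchange.
Variable l : L.
Hypothesis l_min : is_min_label lab Y X2 l.
Local Notation t := (replace_adj s k v l).

Let Yl_top : Y `|` l = X2.
Proof. by case/and3P: l_min => _ /eqP. Qed.

Lemma exchange_spanning : spanning t.
Proof. exact: replace_adj_spanning (ltn_ord k) min_label_pair_join l_min. Qed.

Lemma exchange_minlab : minlab_eq lab t.
Proof. exact: replace_adj_minlab (ltn_ord k) min_label_pair_join l_min. Qed.

Lemma exchange_ridge : ridge s k \subset assoc_facet t.
Proof. by apply: ridge_subset => j _; apply: (pjoin_replace_adj (ltn_ord k) Yl_top). Qed.

Lemma pair_join_in_exchange_facet : Y \in assoc_facet t.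
Proof. by rewrite -(pjoin_replace_adj_mid s v l (ltn_ord k)) pjoin_in_facet /=. Qed.

Hypothesis l_neq : l != u.

Lemma exchange_label_lt : (lab l < lab u)%N.
Proof.
have [al lX2 lY lmin] := is_min_labelP _ le_pair_join rank_pair_cover l_min.
rewrite ltn_neqAle lmin ?spanning_atom ?lower_notin_pair_join -?pair_join_lower ?leUr // andbT.
apply: contra l_neq => /eqP e; apply/eqP/lab_inj => //; rewrite inE ?spanning_atom //.
Qed.

Lemma exchange_label_notin : l \notin s.
Proof.
have [_ lX2 lY _] := is_min_labelP _ le_pair_join rank_pair_cover l_min.
apply/tnthP => -[j lj].
have lX0 : ~~ (l <= X0) by apply: contra lY => /le_trans; apply; apply: leUl.
have [ej|ej] : j = lower_ord k \/ j = upper_ord k by apply: tnth_in_pair; rewrite -lj.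
  by move: l_neq; rewrite lj ej eqxx.
by move: lY; rewrite lj ej leUr.
Qed.

End Exchange.

Lemma swap_good_ordering B : is_ordering B s -> swap_minimal s k ->
  good_ordering B (swap_adj s k).
Proof.
move=> os u_min; rewrite /good_ordering (exchange_minlab u_min) andbT.
exact: perm_trans (swap_adj_perm s k) os.
Qed.

Lemma exchange_lexlt B l : basis r.+1 B -> is_ordering B s ->
  is_min_label lab Y X2 l -> l != u ->
  lexlt (labseq lab [set x in replace_adj s k v l]) (labseq lab B).
Proof.
move=> bB os l_min l_neq; set t := replace_adj s k v l.
have bt : basis r.+1 [set x in t] := spanning_basis (exchange_spanning l_min).
have [/andP[aB /eqP cB] _] := andP bB; have [/andP[aBt /eqP ct] _] := andP bt.
apply/(lexlt_labseqP aB aBt); first by rewrite cB ct.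
have in_t (i : 'I_r.+1) : tnth t i \in [set x in t] by rewrite inE mem_tnth.
exists l; split; rewrite -?(mem_ordering _ os) ?exchange_label_notin //.
  by have := in_t (upper_ord k); rewrite tnth_replace_adj /= (gtn_eqF (ltnSn k)) eqxx.
move=> b; rewrite -(mem_ordering _ os) => /tnthP[j ->] lt_l.
have [jlo|jlo] := eqVneq j (lower_ord k).
  by have := ltn_trans lt_l (exchange_label_lt l_min l_neq); rewrite jlo ltnn.
have [jhi|jhi] := eqVneq j (upper_ord k).
  by have := in_t (lower_ord k); rewrite tnth_replace_adj /= eqxx jhi.
have := in_t j; rewrite tnth_replace_adj.
by rewrite -!(inj_eq val_inj) /= in jlo jhi; rewrite (negbTE jlo) (negbTE jhi).
Qed.

Lemma ridge_unique_facet B t : ~~ swap_minimal s k ->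
  basis r.+1 B -> is_ordering B s -> good_ordering B t ->
  ridge s k \subset assoc_facet t -> assoc_facet t = assoc_facet s.
Proof.
move=> u_notmin bB os gt sub; have t_span := good_ordering_spanning bB gt.
have agree := ridge_agree s_span t_span sub.
have tX0 : pjoin t k = X0 := agree k (leqW (ltnW (ltn_ord k))) (negbT (ltn_eqF (ltnSn k))).
have tX2 : pjoin t k.+2 = X2 := agree k.+2 (ltn_ord k) (negbT (gtn_eqF (ltnSn k.+1))).
have tX1 : pjoin t k.+1 = X0 `|` tnth t (lower_ord k) by rewrite (pjoinS t (lower_ord k)) tX0.
have in_pair (i : 'I_r.+1) : (k <= i)%N -> (i < k.+2)%N ->
    exists2 j, tnth t i = tnth s j & j = lower_ord k \/ j = upper_ord k.
  move=> ki ik2; have /tnthP[j tij] : tnth t i \in s.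
    by rewrite (mem_ordering _ os) -(mem_ordering _ (proj1 (andP gt))) mem_tnth.
  exists j => //; apply: tnth_in_pair; rewrite -tij -?tX0 -?tX2.
    exact: tnth_le_pjoin.
  exact: tnth_notin_pjoin.
have [j tlo [jlo|jhi]] := in_pair (lower_ord k) (leqnn k) (ltnW (ltnSn k.+1)).
  apply: eq_assoc_facet => i /andP[i0 ir]; have [->|ik1] := eqVneq i k.+1.
    by rewrite tX1 tlo jlo -(pjoinS s (lower_ord k)).
  by rewrite agree // ltnW.
have [j' thi [jlo'|jhi']] := in_pair (upper_ord k) (leqnSn k) (leqnn k.+2).
  move: (forallP (proj2 (andP gt)) (upper_ord k)) u_notmin => /=.
  by rewrite /swap_minimal tX1 tlo thi tX2 jhi jlo' => ->.
have := tnth_notin_pjoin t_span (leqnn (upper_ord k)).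
by rewrite thi tX1 tlo jhi jhi' leUr.
Qed.

End AdjacentPair.

Lemma rank_pjoin_joinS (s : r.+1.-tuple L) j T : spanning s -> (j <= r.+1)%N ->
  T \subset [set x in s] -> {in T, forall x, ~~ (x <= pjoin s j)} ->
  rk (pjoin s j `|` joinS T) = (j + #|T|)%N.
Proof.
move=> s_span jr; suff take_rank m : (m <= r.+1)%N -> T \subset [set x in take m s] ->
    {in T, forall x, ~~ (x <= pjoin s j)} -> rk (pjoin s j `|` joinS T) = (j + #|T|)%N.
  by move=> sub Tj; apply: (take_rank r.+1); rewrite ?take_oversize ?size_tuple.
elim: m T => [|m IH] T mr sub Tj.
  rewrite (_ : T = set0) ?cards0 ?addn0 /joinS ?big_set0 ?joinx0 ?rank_pjoin //.
  by apply/setP => x; rewrite inE; apply/negP => /(subsetP sub); rewrite inE take0.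
set i := Ordinal mr; have takeS : take m.+1 s = rcons (take m s) (tnth s i).
  by rewrite (take_nth \bot) ?size_tuple // (tnth_nth \bot).
have sub' : T :\ tnth s i \subset [set x in take m s].
  apply/subsetP => x /setD1P[xi /(subsetP sub)].
  by rewrite !inE takeS mem_rcons inE (negbTE xi).
have [iT|iT] := boolP (tnth s i \in T); last first.
  apply: IH => //; first exact: ltnW.
  apply/subsetP => x xT; apply: (subsetP sub').
  by rewrite !inE xT andbT; apply: contraNneq iT => <-.
have jm : (j <= m)%N by rewrite leqNgt; apply: contra (Tj _ iT) => mj; exact: tnth_le_pjoin.
have Z_le : pjoin s j `|` joinS (T :\ tnth s i) <= pjoin s m.
  by rewrite leUx le_pjoin // joinS_le_pjoin.
rewrite /joinS (big_setD1 _ iT) /= [tnth s i `|` _]joinC joinA -/(joinS _).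
have Z_notin : ~~ (tnth s i <= pjoin s j `|` joinS (T :\ tnth s i)).
  by apply: contra (tnth_notin_pjoin s_span (leqnn i)) => /le_trans; apply.
rewrite (rank_joinA (spanning_atom s_span i) Z_notin) IH ?(ltnW mr) //.
  by rewrite (cardsD1 (tnth s i) T) iT addnS.
by move=> x /setD1P[_ /Tj].
Qed.

Lemma segment_notin_ordering (s s' : r.+1.-tuple L) B' (i : 'I_r.+1) i0 a :
  spanning s -> spanning s' -> is_ordering B' s' -> (i0 <= i)%N ->
  pjoin s' i0 = pjoin s i0 -> a \in B' -> a \notin s ->
  a <= pjoin s i.+1 -> ~~ (a <= pjoin s i) ->
  exists2 q : 'I_r.+1, (i0 <= q <= i)%N & tnth s q \notin B'.
Proof.
move=> s_span s'_span os' i0i es'0 aB' a_s ai1 ai; apply/exists_inP; apply: contraT.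
rewrite negb_exists_in => /forall_inP segB'; set seg := drop i0 (take i.+1 s).
have size_seg : size seg = (i.+1 - i0)%N by rewrite size_drop size_takel // size_tuple.
have mem_seg x : x \in seg -> exists2 q : 'I_r.+1, (i0 <= q <= i)%N & x = tnth s q.
  move=> /(nthP \bot)[q]; rewrite size_seg => qi <-.
  have qr : (i0 + q < r.+1)%N by move: qi (ltn_ord i); lia.
  exists (Ordinal qr); first by rewrite /= leq_addr /=; move: qi; lia.
  by rewrite nth_drop nth_take ?(tnth_nth \bot) //; move: qi; lia.
have uniq_T : uniq (a :: seg).
  rewrite /= drop_uniq ?take_uniq ?(spanning_uniq s_span) // andbT.
  by apply: contra a_s => /mem_seg[q _ ->]; apply: mem_tnth.
set T := [set x in a :: seg].
have TB' : T \subset [set x in s'].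
  apply/subsetP => x; rewrite !inE (mem_ordering _ os') => /predU1P[->//|/mem_seg[q qi ->]].
  by have := segB' q qi; rewrite negbK.
have T_notin : {in T, forall x, ~~ (x <= pjoin s' i0)}.
  move=> x; rewrite inE es'0 => /predU1P[->|/mem_seg[q /andP[i0q _] ->]].
    by apply: contra ai => /le_trans; apply; apply: le_pjoin.
  exact: tnth_notin_pjoin.
have := rank_pjoin_joinS s'_span (leq_trans i0i (ltnW (ltn_ord i))) TB' T_notin.
rewrite cardsE (card_uniqP uniq_T) /= size_seg => rank_T.
have : pjoin s' i0 `|` joinS T <= pjoin s i.+1.
  rewrite es'0 leUx le_pjoin ?leqW //=; apply/joinsP => x; rewrite inE.
  by case/predU1P => [->//|/mem_drop]; apply: mem_take_le_pjoin.
move/rank_le; rewrite rank_T rank_pjoin // addnS subnKC ?ltnn //; exact: leqW.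
Qed.

Lemma ascending_labels (s : r.+1.-tuple L) G i0 i : (i < r.+1)%N ->
  (forall k : 'I_r, pjoin s k.+1 \notin G ->
     (lab (tnth s (lower_ord k)) <= lab (tnth s (upper_ord k)))%N) ->
  (forall j, (i0 < j <= i)%N -> pjoin s j \notin G) ->
  forall q, (i0 <= q <= i)%N -> (lab (nth \bot s q) <= lab (nth \bot s i))%N.
Proof.
move=> ir asc notG q qi.
apply: (@homo_leq_in _ [pred j | i0 <= j <= i] (fun j => lab (nth \bot s j)) leq leqnn);
  rewrite ?inE /= ?leqnn ?andbT //; try lia.
- by move=> j j' /andP[i0j _] /andP[_ j'i] q' /andP[jq' q'j']; rewrite inE /=; lia.
move=> j /andP[i0j _] /andP[_ ji]; have jr : (j < r)%N by lia.
have := asc (Ordinal jr); rewrite !(tnth_nth \bot) /=; apply; apply: notG; lia.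
Qed.

Lemma lexlt_descent B B' (s s' : r.+1.-tuple L) G : basis r.+1 B -> basis r.+1 B' ->
  good_ordering B s -> G \subset assoc_facet s ->
  is_ordering B' s' -> G \subset assoc_facet s' ->
  lexlt (labseq lab B') (labseq lab B) ->
  [exists k : 'I_r, (lab (tnth s (upper_ord k)) < lab (tnth s (lower_ord k)))%N &&
                    (pjoin s k.+1 \notin G)].
Proof.
move=> bB bB' /andP[os s_min] Gs os' Gs' lt; apply: contraT.
rewrite negb_exists => /forallP asc.
have s_span := ordering_spanning bB os; have s'_span := ordering_spanning bB' os'.
have [/andP[aB /eqP cB] _] := andP bB; have [/andP[aB' /eqP cB'] _] := andP bB'.
have [a [aB'a aBa lt_a]] := (lexlt_labseqP aB aB' (etrans cB (esym cB'))).1 lt.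
have aa : atom a := atoms_set_atom aB' aB'a.
have [|i ai i_min] := ex_minnP (ex_intro (fun i => a <= pjoin s i) r.+1 _).
  by rewrite spanning_top // lex1.
case: i ai i_min => [|i] ai i_min; first by rewrite pjoin0 lt_geF ?atom_gt0 in ai.
have ir : (i < r.+1)%N by apply: i_min; rewrite spanning_top // lex1.
have nai : ~~ (a <= pjoin s i) by apply/negP => /i_min; rewrite ltnn.
have a_s : a \notin s by rewrite (mem_ordering _ os).
have lt_ia : (lab (nth \bot s i) < lab a)%N.
  rewrite ltn_neqAle -(tnth_nth _ _ (Ordinal ir)) (minlab_le s_span s_min) // andbT.
  by apply: contra a_s => /eqP/lab_inj <-; rewrite ?mem_tnth ?inE ?spanning_atom.
pose P0 j := (j <= i)%N && ((j == 0%N) || (pjoin s j \in G)).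
have [|i0 /andP[i0i i0G] i0_max] := ex_maxnP (ex_intro P0 0%N _) (fun j Pj => (andP Pj).1).
  by rewrite /P0 eqxx.
have es' : pjoin s' i0 = pjoin s i0.
  case/orP: i0G => [/eqP->|/(subsetP Gs') i0s']; first by rewrite !pjoin0.
  by rewrite (facet_pjoin_rank s'_span i0s') rank_pjoin // (leq_trans i0i) // ltnW.
have [q /andP[i0q qi] /negbTE <-] := @segment_notin_ordering s s' B' (Ordinal ir) i0 a
  s_span s'_span os' i0i es' aB'a a_s ai nai.
apply: lt_a; first by rewrite -(mem_ordering _ os) mem_tnth.
rewrite (tnth_nth \bot); apply: leq_ltn_trans lt_ia.
apply: (@ascending_labels s G i0 i ir) => [k kG|j /andP[i0j ji]|]; last by rewrite i0q.
  by have := asc k; rewrite kG andbT -leqNgt.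
by apply: contraTN i0j => jG; rewrite -leqNgt; apply: i0_max; rewrite /P0 ji jG orbT.
Qed.

Lemma ridge_of_subset (s : r.+1.-tuple L) H : spanning s -> (0 < r)%N ->
  H \subset assoc_facet s -> #|H| = r.-1 -> exists k : 'I_r, H = ridge s k.
Proof.
move=> s_span r0 Hs cH; have [x xs xH] : exists2 x, x \in assoc_facet s & x \notin H.
  apply/subsetPn; apply/negP => /subset_leq_card.
  by rewrite card_assoc_facet // cH; lia.
move: (xs); rewrite mem_assoc_facet => /existsP[k /eqP ex]; exists k.
apply/eqP; rewrite eqEcard cH card_ridge ?ltn_ord // leqnn andbT.
by rewrite /ridge subsetD1 Hs -ex xH.
Qed.

Lemma ridge_in_boundary B s (k : 'I_r) G : basis r.+1 B -> good_ordering B s ->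
  ~~ swap_minimal s k -> G \subset ridge s k -> G \in boundary (Delta lab r.+1 B) r.
Proof.
move=> bB gs u_notmin GH; have s_span := good_ordering_spanning bB gs; have [os _] := andP gs.
rewrite inE; apply/existsP; exists (ridge s k); rewrite GH andbT inE.
apply/and3P; split.
- by apply/DeltaP; exists s => //; apply: subD1set.
- by rewrite card_ridge.
apply/cards1P; exists (assoc_facet s); apply/setP => F; rewrite in_set1 [in LHS]inE.
apply/andP/eqP => [[/(facetsP _ bB)[t gt ->] sub]|->].
  exact: (ridge_unique_facet s_span u_notmin bB os gt sub).
by split; [apply/(facetsP _ bB); exists s | apply: subD1set].
Qed.

Lemma Delta_lexlt_sub_boundary B B' G : basis r.+1 B -> basis r.+1 B' ->
  lexlt (labseq lab B') (labseq lab B) ->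
  G \in Delta lab r.+1 B -> G \in Delta lab r.+1 B' -> G \in boundary (Delta lab r.+1 B) r.
Proof.
move=> bB bB' lt /DeltaP[s0 gs0 Gs0] /DeltaP[s' /andP[os' _] Gs'].
pose P s := good_ordering B s && (G \subset assoc_facet s).
have [s /andP[gs Gs] s_max] := arg_maxnP weight (introT andP (conj gs0 Gs0) : P s0).
have s_span := good_ordering_spanning bB gs; have [os s_min] := andP gs.
have /existsP[k /andP[desc kG]] := lexlt_descent bB bB' gs Gs os' Gs' lt.
have GH : G \subset ridge s k by rewrite subsetD1 Gs kG.
have [u_min|] := boolP (swap_minimal s k); last by move/ridge_in_boundary; apply.
have Psw : P (swap_adj s k).
  by rewrite /P swap_good_ordering // (subset_trans GH (exchange_ridge u_min)).
by have := leq_ltn_trans (s_max _ Psw) (weight_swap_lt desc); rewrite ltnn.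
Qed.

Lemma boundary_sub_Delta_lexlt B G : basis r.+1 B -> (0 < r)%N ->
  G \in boundary (Delta lab r.+1 B) r ->
  exists B', [&& nbc_basis rk lab r.+1 B', lexlt (labseq lab B') (labseq lab B)
               & G \in Delta lab r.+1 B'].
Proof.
move=> bB r0; rewrite inE => /existsP[H /andP[]].
rewrite inE => /and3P[HD /eqP cH /cards1P[F eF]] GH.
have : F \in [set F in facets (Delta lab r.+1 B) | H \subset F] by rewrite eF set11.
rewrite inE => /andP[/(facetsP _ bB)[s gs eFs] Hs]; rewrite {F}eFs in eF Hs.
have s_span := good_ordering_spanning bB gs; have [os s_min] := andP gs.
have [k eH] := ridge_of_subset s_span r0 Hs cH; rewrite {H HD Hs cH}eH in eF GH.
have [l l_min] :=
  min_label_exists (spanning_atom s_span (lower_ord k)) (pair_join_lower k s_span).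
have [l_u|l_neq] := eqVneq l (tnth s (lower_ord k)).
  rewrite {l}l_u in l_min.
  have : assoc_facet (swap_adj s k) \in
      [set F in facets (Delta lab r.+1 B) | ridge s k \subset F].
    rewrite inE (exchange_ridge l_min) andbT; apply/(facetsP _ bB).
    by exists (swap_adj s k); rewrite ?swap_good_ordering.
  rewrite eF inE => /eqP e; have := pair_join_in_exchange_facet s k (tnth s (lower_ord k)).
  by rewrite -[replace_adj _ _ _ _]/(swap_adj s k) e (negbTE (pair_join_notin_facet k s_span)).
set t := replace_adj s k (tnth s (upper_ord k)) l.
have t_span : spanning t := exchange_spanning s_span s_min l_min.
exists [set x in t]; rewrite minlab_nbc_basis ?exchange_minlab //=.
rewrite (exchange_lexlt s_span s_min bB os l_min l_neq) /=.
apply/DeltaP; exists t; last exact: subset_trans GH (exchange_ridge l_min).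
by rewrite /good_ordering ordering_set_tuple ?spanning_uniq ?exchange_minlab.
Qed.

(* [boundary] counts ridges with the truncated [r.-1], so the case [r = 0] must be
   excluded separately. *)
Lemma lexlt_basis_rank_gt0 B B' : basis r.+1 B -> basis r.+1 B' ->
  lexlt (labseq lab B') (labseq lab B) -> (0 < r)%N.
Proof.
move=> bB bB' lt; rewrite lt0n; apply: contraTneq lt => r0.
have top (C : {set L}) : basis r.+1 C -> C = [set \top].
  by rewrite r0 => /andP[/andP[_ /cards1P[b ->]] /eqP]; rewrite /joinS big_set1 => ->.
by rewrite (top _ bB) (top _ bB') lexlt_irr.
Qed.

End FixedRank.

End GeometricLattice.

Unset Implicit Arguments.
Local Close Scope order_scope.

Theorem proposition4p5 (disp : Order.disp_t) (L : finTBLatticeType disp)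
    (rk : L -> nat) (r : nat) (lab : L -> nat)
    (Hgeom : geometric rk)
    (Hrank : rk Order.top = r.+1)
    (Hlab : {in [pred a | atom a] &, injective lab})
    (B : {set L})
    (HB : nbc_basis rk lab r.+1 B)
    (Hnotfirst : exists B' : {set L},
        nbc_basis rk lab r.+1 B' && lexlt (labseq lab B') (labseq lab B)) :
  Delta lab r.+1 B :&:
    [set G : {set L} | [exists B' : {set L},
        [&& nbc_basis rk lab r.+1 B', lexlt (labseq lab B') (labseq lab B)
          & G \in Delta lab r.+1 B']]]
  = boundary (Delta lab r.+1 B) r.
Proof.
have bB : basis r.+1 B by case/andP: HB.
have [B0 /andP[/andP[bB0 _] lt0]] := Hnotfirst.
have r0 := lexlt_basis_rank_gt0 bB bB0 lt0.
apply/setP => G; rewrite in_setI [in X in _ && X]inE; apply/andP/idP.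
  case=> GB /existsP[B' /and3P[/andP[bB' _] lt GB']].
  exact: (Delta_lexlt_sub_boundary Hgeom Hlab Hrank bB bB' lt GB GB').
move=> Gb; split; first exact: boundary_generated_sub Gb.
exact/existsP/(boundary_sub_Delta_lexlt Hgeom Hlab Hrank bB r0 Gb).
Qed.
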